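(* Let $n\geqslant 1$ and $1\leqslant i\leqslant n$. If $\sigma,\tau\in W_n$ satisfy $\sigma s_j\cdots s_nW_{n-1}=\tau s_j\cdots s_nW_{n-1}$ for all $j=i,\ldots,n+1$, then $\sigma^{-1}\tau\in W_{i-2}$. Equivalently, $W_{n-1}\cap(s_nW_{n-1}s_n)\cap\cdots\cap(s_i\cdots s_nW_{n-1}s_n\cdots s_i)=W_{i-2}$.
   Context: Standing setup: $\Gamma_1$ is an arbitrary finite Coxeter diagram with a preferred vertex $s_1$ (edge $\{s,t\}$ iff $m_{st}\geqslant3$; unlabelled edge means $m_{st}=3$, no edge means $m_{st}=2$). For $n\geqslant 2$, $\Gamma_n$ is obtained from $\Gamma_{n-1}$ by adding one new vertex $s_n$ joined by an unlabelled edge to $s_{n-1}$ and to no other vertex. $\Gamma_0$ is $\Gamma_1$ with $s_1$ deleted; $\Gamma_{-1}$ is $\Gamma_1$ with $s_1$ and all its neighbours deleted. For $n\geqslant -1$, $S_n$ is the vertex set of $\Gamma_n$ and $W_n$ the Coxeter group; $S_n=S_0\cup\{s_1,\dots,s_n\}$ and $W_m$ ($m\leqslant n$) is identified with the standard parabolic subgroup of $W_n$ generated by $S_m$. Convention: for $j=n+1$ the symbol $s_j\cdots s_nW_{n-1}$ means $W_{n-1}$. *)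

From Stdlib Require Import Relations.
From mathcomp Require Import all_boot all_algebra.
Set Implicit Arguments. Unset Strict Implicit. Unset Printing Implicit Defensive.

(* A Coxeter matrix on a finite vertex set V; the entry 0 encodes m_st = infinity. *)
Definition coxeter_matrix (V : finType) (m : V -> V -> nat) : Prop :=
  (forall s t, m s t = m t s) /\ (forall s, m s s = 1%N) /\
  (forall s t, s != t -> m s t != 1%N).

(* Vertices of Gamma_n for all n at once: inl v is a vertex of Gamma_1,
   inr k is the new vertex s_(k+2). *)
Definition Mext (V : finType) (m : V -> V -> nat) (s1 : V)
  (x y : (V + nat)%type) : nat :=
  match x, y with
  | inl a, inl b => m a b
  | inl a, inr 0 | inr 0, inl a => if a == s1 then 3 else 2
  | inl _, inr _ | inr _, inl _ => 2
  | inr k, inr l => if k == l then 1 else if (k.+1 == l) || (l.+1 == k) then 3 else 2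
  end.

Definition inS (V : finType) (m : V -> V -> nat) (s1 : V) (k : int)
  (x : (V + nat)%type) : bool :=
  match k with
  | Posz 0 => if x is inl v then v != s1 else false
  | Posz n.+1 => match x with inl _ => true | inr j => (j + 2 <= n.+1)%N end
  | Negz 0 => if x is inl v then (v != s1) && (m s1 v == 2%N) else false
  | Negz _ => false
  end.

Definition gen (V : finType) (s1 : V) (k : nat) : (V + nat)%type :=
  if k == 1%N then inl s1 else inr (k - 2)%N.

Definition cword (V : finType) (s1 : V) (j n : nat) : seq (V + nat)%type :=
  map (gen s1) (iota j (n.+1 - j)).

Definition cox_step (X : eqType) (M : X -> X -> nat) (P : pred X)
  (u v : seq X) : Prop :=
  exists a b s t, [/\ P s, P t, M s t != 0%N,
    u = a ++ flatten (nseq (M s t) [:: s; t]) ++ b & v = a ++ b].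

Definition cox_eq (X : eqType) (M : X -> X -> nat) (P : pred X) :
  relation (seq X) := clos_refl_sym_trans _ (cox_step M P).

Definition Weq (V : finType) (m : V -> V -> nat) (s1 : V) (n : nat) :=
  cox_eq (Mext m s1) (inS m s1 n%:Z).

Definition word_in (V : finType) (m : V -> V -> nat) (s1 : V) (k : int)
  (w : seq (V + nat)%type) : bool := all (inS m s1 k) w.

From Stdlib Require Import Relations ClassicalEpsilon FunctionalExtensionality.
From mathcomp Require Import all_boot all_algebra algC cyclotomic ring zify.
Set Implicit Arguments. Unset Strict Implicit. Unset Printing Implicit Defensive.

(* Let s be a generator outside J and J' = {r in J | m_sr = 2}; then W_J meets s W_J s in
   W_J'.  Two invariants give this.  First, the Tits representation shows that neither s
   nor, when m_sr <> 2, s r s lies in W_J.  Second, the parity of the number of prefix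
   reflections of a word equal to a fixed reflection t is invariant under the Coxeter
   relations.  If x and s x s lie in W_J, counting reflections equal to s shows that x
   commutes with s.  If r x' is a shortest word over J for such an x, then r is its only
   prefix reflection equal to r; since x commutes with s, it then has an odd number of
   prefix reflections equal to s r s, and one of them lies in W_J, so m_sr = 2 and the
   induction continues with x'.
   The theorem follows by descending induction on j: the vertices of S_(j-1) commuting
   with s_j are exactly S_(j-2), and conversely S_(i-2) commutes with s_i, ..., s_n. *)

Section RootsOfUnity.
Import GRing.Theory Num.Theory.
Local Open Scope ring_scope.

Lemma sum_expr_root_eq0 (l : algC) k :
  l ^+ k = 1 -> l != 1 -> \sum_(i < k) l ^+ i = 0.
Proof.
move=> lk1 l_neq1; have := subrX1 l k; rewrite lk1 subrr => /esym /eqP.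
by rewrite mulf_eq0 subr_eq0 (negbTE l_neq1) => /eqP.
Qed.

(* The sequence is a combination of [l ^+ i] and [u ^+ i], each summing to 0 over a
   period. *)
Lemma sum_lin_rec2_root_eq0 (l u : algC) k (a : nat -> algC) :
  l * u = 1 -> l ^+ k = 1 -> l != 1 -> l != u ->
  (forall i, a i.+2 = (l + u) * a i.+1 - a i) -> \sum_(i < k) a i = 0.
Proof.
move=> lu1 lk1 l_neq1 l_neq_u rec.
have recl i : a i.+1 - l * a i = u ^+ i * (a 1 - l * a 0).
  elim: i => [|i IH]; first by rewrite expr0 mul1r.
  by rewrite exprS -mulrA -IH rec mulrBr mulrA (mulrC u l) lu1 mul1r; ring.
have recu i : a i.+1 - u * a i = l ^+ i * (a 1 - u * a 0).
  elim: i => [|i IH]; first by rewrite expr0 mul1r.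
  by rewrite exprS -mulrA -IH rec mulrBr mulrA lu1 mul1r; ring.
have closed_form i :
    (l - u) * a i = l ^+ i * (a 1 - u * a 0) - u ^+ i * (a 1 - l * a 0).
  by rewrite -recl -recu; ring.
have uk1 : u ^+ k = 1 by have := congr1 (fun x => x ^+ k) lu1; rewrite exprMn lk1 mul1r expr1n.
have u_neq1 : u != 1 by apply: contraNneq l_neq1 => u1; rewrite -lu1 u1 mulr1.
have : (l - u) * \sum_(i < k) a i = 0.
  rewrite mulr_sumr; under eq_bigr => i _ do rewrite closed_form.
  by rewrite sumrB -!mulr_suml !sum_expr_root_eq0 // !mul0r subrr.
by move/eqP; rewrite mulf_eq0 subr_eq0 (negbTE l_neq_u) => /eqP.
Qed.

Definition zeta k : algC := sval (C_prim_root_exists (ltn0Sn (k.*2).-1)).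

Lemma zetaP k : (0 < k)%N -> (k.*2).-primitive_root (zeta k).
Proof.
move=> k_gt0; rewrite /zeta; case: (C_prim_root_exists _) => z /=.
by rewrite prednK // double_gt0.
Qed.

Lemma zeta_expr k : (2 < k)%N ->
  [/\ zeta k != 0, zeta k ^+ 2 != 1, zeta k ^+ 4 != 1 & (zeta k ^+ 2) ^+ k = 1].
Proof.
move=> k_gt2; have zk := zetaP (ltnW (ltnW k_gt2) : (0 < k)%N).
have z2k : zeta k ^+ k.*2 = 1 by exact: prim_expr_order zk.
have zj_neq1 j : (0 < j < k.*2)%N -> zeta k ^+ j != 1.
  move=> j_bd; rewrite -(expr0 (zeta k)) (eq_prim_root_expr zk) modn_small; last by lia.
  by rewrite mod0n; lia.
split; [|apply: zj_neq1; lia|apply: zj_neq1; lia|by rewrite -exprM mul2n].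
apply/eqP => z0; move: z2k; rewrite z0 expr0n.
have -> : (k.*2 == 0)%N = false by lia.
by move/eqP; rewrite eq_sym oner_eq0.
Qed.

(* [cos_coef m] plays the role of [-2 cos (pi / m)], with [m = 0] standing for an
   infinite label; all that matters is that, for [m >= 3],
   [cos_coef m ^+ 2 - 2 = l + l^-1] with [l] a primitive m-th root of unity. *)
Definition cos_coef m : algC :=
  if m == 0%N then -2 else if m == 1%N then 2 else if m == 2%N then 0
  else - (zeta m + (zeta m)^-1).

Lemma cos_coef_neq0 m : m != 2%N -> m != 1%N -> cos_coef m != 0.
Proof.
move=> m_neq2 m_neq1; rewrite /cos_coef (negbTE m_neq2) (negbTE m_neq1).
case: ifP => [_|/negbT m_neq0]; first by rewrite oppr_eq0 pnatr_eq0.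
have m_gt2 : (2 < m)%N by lia.
have [z_neq0 _ z4_neq1 _] := zeta_expr m_gt2.
rewrite oppr_eq0; apply: contra z4_neq1 => /eqP zsum0.
have z2 : zeta m ^+ 2 = -1.
  have : zeta m * (zeta m + (zeta m)^-1) = 0 by rewrite zsum0 mulr0.
  by rewrite mulrDr mulfV // => /eqP; rewrite addr_eq0 expr2 => /eqP.
by rewrite (_ : 4%N = (2 * 2)%N) // exprM z2 sqrrN expr1n.
Qed.
End RootsOfUnity.

Section TitsRepresentation.
Import GRing.Theory Num.Theory.
Local Open Scope ring_scope.
Variables (X : eqType) (M : X -> X -> nat) (P : pred X).
Hypothesis M_sym : forall s t, M s t = M t s.
Hypothesis M_diag : forall s, M s s = 1%N.
Hypothesis M_neq1 : forall s t, s != t -> M s t != 1%N.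

Definition tits_form u v := cos_coef (M u v).

(* The reflection of the generator [u], acting on the dual of the Tits representation. *)
Definition tits_refl u (f : X -> algC) := fun v => f v - tits_form u v * f u.

Definition tits_act (w : seq X) f := foldr tits_refl f w.

Lemma tits_form_diag s : tits_form s s = 2. Proof. by rewrite /tits_form M_diag. Qed.

Lemma tits_form_sym s t : tits_form s t = tits_form t s.
Proof. by rewrite /tits_form M_sym. Qed.

Lemma tits_act_cat u v f : tits_act (u ++ v) f = tits_act u (tits_act v f).
Proof. by rewrite /tits_act foldr_cat. Qed.

Lemma tits_reflK s : involutive (tits_refl s).
Proof.
by move=> f; apply: functional_extensionality => v; rewrite /tits_refl tits_form_diag; ring.
Qed.

Section DihedralRotation.
Variables (s t : X).
Hypothesis s_neq_t : s != t.
Let b := tits_form s t.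
Let rot f := tits_refl s (tits_refl t f).

Lemma rotE f v : rot f v = f v - tits_form t v * f t - tits_form s v * (f s - b * f t).
Proof. by rewrite /rot /tits_refl /= (tits_form_sym t s) -/b; ring. Qed.

Lemma rot_s f : rot f s = - f s + b * f t.
Proof. by rewrite rotE tits_form_diag tits_form_sym -/b; ring. Qed.

Lemma rot_t f : rot f t = - b * f s + (b ^+ 2 - 1) * f t.
Proof. by rewrite rotE tits_form_diag -/b; ring. Qed.

Lemma tits_act_alternating k f : tits_act (flatten (nseq k [:: s; t])) f = iter k rot f.
Proof. by elim: k => //= k ->. Qed.

Lemma iter_rotE k f v : iter k rot f v = f v - tits_form t v * (\sum_(i < k) iter i rot f t)
   - tits_form s v * (\sum_(i < k) iter i rot f s - b * \sum_(i < k) iter i rot f t).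
Proof.
elim: k => [|k IH]; first by rewrite !big_ord0 /=; ring.
by rewrite iterS rotE IH !big_ord_recr /=; ring.
Qed.

Lemma iter_rot_s_rec f i :
  iter i.+2 rot f s = (b ^+ 2 - 2) * iter i.+1 rot f s - iter i rot f s.
Proof. by rewrite !iterS (rot_s (rot _)) (rot_t (iter i rot f)) (rot_s (iter i rot f)); ring. Qed.

Lemma iter_rot_t_rec f i :
  iter i.+2 rot f t = (b ^+ 2 - 2) * iter i.+1 rot f t - iter i rot f t.
Proof. by rewrite !iterS (rot_t (rot _)) (rot_t (iter i rot f)) (rot_s (iter i rot f)); ring. Qed.

(* With [z] a primitive 2m-th root of unity and [b = -(z + z^-1)], both coordinates
   satisfy a linear recurrence with characteristic roots [z^2] and [z^-2]. *)
Lemma iter_rot_order f : M s t != 0%N -> iter (M s t) rot f = f.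
Proof.
move=> m_neq0; have m_neq1 := M_neq1 s_neq_t.
suff [sum_s sum_t] : \sum_(i < M s t) iter i rot f s = 0 /\ \sum_(i < M s t) iter i rot f t = 0.
  by apply: functional_extensionality => v; rewrite iter_rotE sum_s sum_t; ring.
have [m2|m_neq2] := eqVneq (M s t) 2%N.
  have b0 : b = 0 by rewrite /b /tits_form m2.
  by rewrite m2 !big_ord_recr !big_ord0 /= rot_s rot_t b0; split; ring.
have m_gt2 : (2 < M s t)%N by lia.
have [z_neq0 z2_neq1 z4_neq1 z2m] := zeta_expr m_gt2.
set z := zeta (M s t) in z_neq0 z2_neq1 z4_neq1 z2m.
have bE : b = - (z + z^-1).
  by rewrite /b /tits_form /cos_coef (negbTE m_neq0) (negbTE m_neq1) (negbTE m_neq2).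
have zzV : z * z^-1 = 1 by rewrite mulfV.
set l := z ^+ 2; set u := z^-1 ^+ 2.
have lu1 : l * u = 1 by rewrite /l /u -exprMn zzV expr1n.
have b2E : b ^+ 2 - 2 = l + u by rewrite bE sqrrN sqrrD zzV /l /u; ring.
have l_neq_u : l != u.
  apply: contra z4_neq1 => /eqP lu; apply/eqP.
  by rewrite (_ : 4%N = (2 * 2)%N) // exprM -/l expr2 {2}lu lu1.
split.
  apply: (sum_lin_rec2_root_eq0 (a := fun i => iter i rot f s) lu1 z2m z2_neq1 l_neq_u) => i.
  by rewrite -b2E iter_rot_s_rec.
apply: (sum_lin_rec2_root_eq0 (a := fun i => iter i rot f t) lu1 z2m z2_neq1 l_neq_u) => i.
by rewrite -b2E iter_rot_t_rec.
Qed.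
End DihedralRotation.

Lemma tits_act_relator s t f :
  M s t != 0%N -> tits_act (flatten (nseq (M s t) [:: s; t])) f = f.
Proof.
move=> m_neq0; have [<-|s_neq_t] := eqVneq s t; first by rewrite M_diag /= tits_reflK.
by rewrite tits_act_alternating iter_rot_order.
Qed.

Lemma tits_act_cox_eq u v : cox_eq M P u v -> tits_act u = tits_act v.
Proof.
elim=> {u v} [u v [a [b [s [t [_ _ m_neq0 -> ->]]]]]|//|u v _ ->//|u v w _ -> _ ->//].
by apply: functional_extensionality => f; rewrite !tits_act_cat tits_act_relator.
Qed.

Section Parabolic.
Variables (J : pred X) (s : X).
Hypothesis s_notin_J : ~~ J s.
Let dirac_s : X -> algC := fun v => if v == s then 1 else 0.

Lemma tits_act_parabolic_dirac z : all J z -> tits_act z dirac_s = dirac_s.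
Proof.
elim: z => //= r z IH /andP[Jr Jz]; rewrite IH //.
apply: functional_extensionality => v; rewrite /tits_refl /dirac_s.
by rewrite (negbTE (_ : r != s)) ?mulr0 ?subr0 //; apply: contraNneq s_notin_J => <-.
Qed.

Lemma gen_notin_parabolic z : all J z -> ~ cox_eq M P z [:: s].
Proof.
move=> Jz /tits_act_cox_eq /(congr1 (fun F => F dirac_s s)).
rewrite /= tits_act_parabolic_dirac // /tits_refl tits_form_diag /dirac_s eqxx => /eqP.
apply/negP; rewrite (_ : 1 - 2 * 1 = -1); last by ring.
by rewrite -subr_eq0 opprK -(natrD _ 1 1) pnatr_eq0.
Qed.

(* The coefficient of [s] in the image of [dirac_s] under [s r s] is [1 - b^2], not [1]. *)
Lemma conj_gen_notin_parabolic r z : J r -> M s r != 2%N -> all J z ->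
  ~ cox_eq M P z [:: s; r; s].
Proof.
move=> Jr m_neq2 Jz /tits_act_cox_eq /(congr1 (fun F => F dirac_s s)).
have r_neq_s : (r == s) = false by apply/negbTE; apply: contraNneq s_notin_J => <-.
have b_neq0 : tits_form s r != 0.
  by apply: cos_coef_neq0 => //; apply: M_neq1; rewrite eq_sym r_neq_s.
rewrite /= tits_act_parabolic_dirac // /tits_refl /dirac_s eqxx r_neq_s !tits_form_diag.
rewrite (tits_form_sym r s); set c := tits_form s r in b_neq0 * => e.
have c2 : c ^+ 2 = 1 - (1 - 2 * 1 - c * (0 - c * 1) - 2 * (1 - 2 * 1 - c * (0 - c * 1))).
  by ring.
by move: b_neq0; rewrite -sqrf_eq0 c2 -e subrr eqxx.
Qed.
End Parabolic.
End TitsRepresentation.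

Section CoxeterWords.
Variables (X : eqType) (M : X -> X -> nat) (P : pred X).
Hypothesis M_sym : forall s t, M s t = M t s.
Hypothesis M_diag : forall s, M s s = 1%N.

Local Notation weq := (cox_eq M P).

Lemma cox_eq_refl u : weq u u. Proof. exact: rst_refl. Qed.
Lemma cox_eq_sym u v : weq u v -> weq v u. Proof. exact: rst_sym. Qed.
Lemma cox_eq_trans u v w : weq u v -> weq v w -> weq u w. Proof. exact: rst_trans. Qed.

Lemma cox_eq_ctx a b u v : weq u v -> weq (a ++ u ++ b) (a ++ v ++ b).
Proof.
elim=> {u v} [u v [a0 [b0 [s [t [Ps Pt m_neq0 -> ->]]]]]|u|u v _|u v w _ IH1 _ IH2].
- by apply: rst_step; exists (a ++ a0), (b0 ++ b), s, t; rewrite -!catA.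
- exact: rst_refl.
- exact: rst_sym.
- exact: rst_trans IH2.
Qed.

Lemma cox_eq_catl a u v : weq u v -> weq (a ++ u) (a ++ v).
Proof. by move/(cox_eq_ctx a [::]); rewrite !cats0. Qed.

Lemma cox_eq_catr b u v : weq u v -> weq (u ++ b) (v ++ b).
Proof. by move/(cox_eq_ctx [::] b). Qed.

Lemma cox_eq_relator s t : P s -> P t -> M s t != 0%N ->
  weq (flatten (nseq (M s t) [:: s; t])) [::].
Proof. by move=> Ps Pt m_neq0; apply: rst_step; exists [::], [::], s, t; rewrite cats0. Qed.

Lemma cox_eq_cancel a b s : P s -> weq (a ++ s :: s :: b) (a ++ b).
Proof. by move=> Ps; have := cox_eq_ctx a b (cox_eq_relator Ps Ps _); rewrite M_diag; apply. Qed.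

Lemma cox_eq_revK u : all P u -> weq (rev u ++ u) [::].
Proof.
elim: u => [|x u IH] /=; first by move=> _; exact: cox_eq_refl.
case/andP=> Px Pu; rewrite rev_cons cat_rcons.
exact: cox_eq_trans (cox_eq_cancel _ _ Px) (IH Pu).
Qed.

Lemma cox_eq_catrevK u : all P u -> weq (u ++ rev u) [::].
Proof. by move=> Pu; have := @cox_eq_revK (rev u); rewrite revK all_rev; apply. Qed.

Lemma cox_eq_cancel_l u v : all P u -> weq (rev u ++ u ++ v) v.
Proof. by move=> Pu; have := cox_eq_ctx [::] v (cox_eq_revK Pu); rewrite /= catA. Qed.

Lemma cox_eq_cancel_r u v : all P u -> weq (v ++ u ++ rev u) v.
Proof. by move=> Pu; have := cox_eq_ctx v [::] (cox_eq_catrevK Pu); rewrite !cats0. Qed.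

Lemma cox_eq_cons_cancel r u v : P r -> weq (r :: u) (r :: v) -> weq u v.
Proof.
move=> Pr /(cox_eq_catl [:: r]) /= ruv.
apply: cox_eq_trans (cox_eq_sym (cox_eq_cancel [::] u Pr)) _.
exact: cox_eq_trans ruv (cox_eq_cancel [::] v Pr).
Qed.

Lemma cox_eq_conj u z t : all P u ->
  weq (u ++ z ++ rev u) t <-> weq z (rev u ++ t ++ u).
Proof.
move=> Pu; have Pu' : all P (rev u) by rewrite all_rev.
split=> h.
- apply: cox_eq_trans (cox_eq_ctx (rev u) u h); apply: cox_eq_sym.
  rewrite -!catA; apply: cox_eq_trans (cox_eq_cancel_l _ Pu) _.
  by have := cox_eq_cancel_r z Pu'; rewrite revK.
- apply: cox_eq_trans (cox_eq_ctx u (rev u) h) _; rewrite -!catA.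
  have := cox_eq_cancel_l (t ++ u ++ rev u) Pu'; rewrite revK => /cox_eq_trans; apply.
  exact: cox_eq_cancel_r.
Qed.

Lemma cox_eq_commute r t : P r -> P t -> M r t = 2%N -> weq [:: r; t] [:: t; r].
Proof.
move=> Pr Pt mrt2; have := cox_eq_relator Pt Pr; rewrite M_sym mrt2 => /(_ isT) /=.
move/(cox_eq_catl [:: r; t]); rewrite cats0 => /cox_eq_sym /cox_eq_trans; apply.
have := cox_eq_cancel [:: r] [:: r; t; r] Pt => /= /cox_eq_trans; apply.
exact: (cox_eq_cancel [::] [:: t; r] Pr).
Qed.

Lemma cox_eq_commute_gen g w : P g -> all P w -> all (fun r => M g r == 2%N) w ->
  weq (g :: w) (w ++ [:: g]).
Proof.
move=> Pg; elim: w => [|r w IH] /=; first by move=> _ _; exact: cox_eq_refl.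
case/andP=> Pr Pw /andP[/eqP mgr2 gw].
apply: cox_eq_trans (cox_eq_ctx [::] w (cox_eq_commute Pg Pr mgr2)) _.
by have := cox_eq_catl [:: r] (IH Pw gw).
Qed.

Lemma cox_eq_commute_word c w : all P c -> all P w ->
  {in c, forall g, all (fun r => M g r == 2%N) w} -> weq (c ++ w) (w ++ c).
Proof.
move=> + Pw; elim: c => [|g c IH] /=; first by rewrite cats0 => _ _; exact: cox_eq_refl.
case/andP=> Pg Pc c_comm.
apply: cox_eq_trans (cox_eq_catl [:: g] (IH Pc _)) _.
  by move=> g' g'c; apply: c_comm; rewrite inE g'c orbT.
by have := cox_eq_catr c (cox_eq_commute_gen Pg Pw (c_comm g (mem_head _ _))); rewrite -catA.
Qed.

Lemma all_alternating s t k : P s -> P t -> all P (flatten (nseq k [:: s; t])).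
Proof. by move=> Ps Pt; elim: k => //= k ->; rewrite Ps Pt. Qed.

Lemma cox_eq_all u v : weq u v -> all P u = all P v.
Proof.
elim=> {u v} [u v [a [b [s [t [Ps Pt _ -> ->]]]]]|//|u v _ ->//|u v w _ -> _ ->//].
by rewrite !all_cat all_alternating // andbT.
Qed.

Lemma cox_eq_coset_conj sigma tau c w : all P sigma -> all P c -> all P w ->
  weq (sigma ++ c) (tau ++ c ++ w) -> weq (rev sigma ++ tau) (c ++ rev w ++ rev c).
Proof.
move=> Psigma Pc Pw h.
have e1 : weq c ((rev sigma ++ tau) ++ c ++ w).
  apply: cox_eq_trans (cox_eq_sym (cox_eq_cancel_l c Psigma)) _.
  by rewrite -catA; exact: cox_eq_catl.
have e2 : weq (c ++ rev w) ((rev sigma ++ tau) ++ c).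
  apply: cox_eq_trans (cox_eq_catr (rev w) e1) _.
  by have := cox_eq_cancel_r ((rev sigma ++ tau) ++ c) Pw; rewrite -!catA.
apply: cox_eq_sym; have := cox_eq_catr (rev c) e2; rewrite -!catA => /cox_eq_trans; apply.
by have := cox_eq_cancel_r (rev sigma ++ tau) Pc; rewrite -!catA.
Qed.

Definition cox_eqb u v : bool := if excluded_middle_informative (weq u v) then true else false.

Lemma cox_eqbP u v : reflect (weq u v) (cox_eqb u v).
Proof. by rewrite /cox_eqb; case: excluded_middle_informative => h; constructor. Qed.

Lemma cox_eqb_refl u : cox_eqb u u.
Proof. exact/cox_eqbP/cox_eq_refl. Qed.

Variable x0 : X.

Definition prefix_refl (w : seq X) j := take j w ++ nth x0 w j :: rev (take j w).

(* The parity of [refl_count] is the reflection cocycle of W. *)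
Definition refl_count (w t : seq X) :=
  count (fun j => cox_eqb (prefix_refl w j) t) (iota 0 (size w)).

Lemma refl_count_cox_eqr w t t' : weq t t' -> refl_count w t = refl_count w t'.
Proof.
move=> tt'; apply: eq_count => j; apply/cox_eqbP/cox_eqbP => h.
  exact: cox_eq_trans h tt'.
exact: cox_eq_trans h (cox_eq_sym tt').
Qed.

Lemma refl_count_cat u v t : all P u ->
  refl_count (u ++ v) t = refl_count u t + refl_count v (rev u ++ t ++ u).
Proof.
move=> Pu; rewrite /refl_count size_cat iotaD count_cat add0n; congr (_ + _).
  apply: eq_in_count => j; rewrite mem_iota add0n => /andP[_ j_lt].
  by rewrite /prefix_refl take_cat j_lt nth_cat j_lt.
rewrite -{1}(addn0 (size u)) iotaDl count_map; apply: eq_count => j /=.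
rewrite /prefix_refl take_cat ltnNge leq_addr /= nth_cat ltnNge leq_addr /= addKn rev_cat.
rewrite (_ : _ ++ _ :: _ ++ _ = u ++ (take j v ++ nth x0 v j :: rev (take j v)) ++ rev u).
  by apply/cox_eqbP/cox_eqbP => /(cox_eq_conj _ _ Pu).
by rewrite -!catA.
Qed.

Lemma refl_count1 z t : refl_count [:: z] t = cox_eqb [:: z] t.
Proof. by rewrite /refl_count /prefix_refl /= addn0. Qed.

Fixpoint alternating (x y : X) k := if k is k'.+1 then x :: alternating y x k' else [::].

Lemma alternating_flatten x y k : flatten (nseq k [:: x; y]) = alternating x y k.*2.
Proof. by elim: k => //= k ->. Qed.

Lemma size_alternating x y k : size (alternating x y k) = k.
Proof. by elim: k x y => //= k IH x y; rewrite IH. Qed.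

Lemma alternatingD x y a b : alternating x y (a + b) =
  alternating x y a ++ (if odd a then alternating y x b else alternating x y b).
Proof. by elim: a x y => [|a IH] x y //=; rewrite IH; case: (odd a). Qed.

Lemma alternating_rcons x y j :
  alternating x y j.+1 = rcons (alternating x y j) (if odd j then y else x).
Proof. by rewrite -addn1 alternatingD -cats1; case: (odd j). Qed.

Lemma rev_alternating x y j :
  rev (alternating x y j) = if odd j then alternating x y j else alternating y x j.
Proof.
elim: j x y => [|j IH] x y //; rewrite [alternating x y _]/= rev_cons IH.
case odd_j: (odd j); rewrite [odd _.+1]/= odd_j /=.
  by rewrite -[y :: _]/(alternating y x j.+1) alternating_rcons odd_j.
by rewrite -[x :: _]/(alternating x y j.+1) alternating_rcons odd_j.
Qed.

Lemma prefix_refl_alternating x y L j : j < L ->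
  prefix_refl (alternating x y L) j = alternating x y j.*2.+1.
Proof.
move=> j_lt; rewrite -(subnKC (ltnW j_lt)) alternatingD /prefix_refl.
rewrite take_size_cat ?size_alternating // nth_cat size_alternating ltnn subnn.
rewrite (_ : j.*2.+1 = j + j.+1) ?alternatingD ?rev_alternating; last by rewrite -addnn addnS.
by case: (L - j) (subn_gt0 j L) => [|l]; [rewrite j_lt | case: (odd j)].
Qed.

Lemma prefix_refl_alternating_shift x y k j : j < k ->
  prefix_refl (alternating x y k.*2) (k + j) =
  alternating x y k.*2 ++ prefix_refl (alternating x y k.*2) j.
Proof.
move=> j_lt; rewrite prefix_refl_alternating; last by rewrite -addnn ltn_add2l.
rewrite prefix_refl_alternating; last by rewrite -addnn ltn_addr.
by rewrite doubleD -addnS alternatingD odd_double.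
Qed.

Lemma refl_count_relator_even x y k t : weq (alternating x y k.*2) [::] ->
  ~~ odd (refl_count (alternating x y k.*2) t).
Proof.
move=> rel1; rewrite /refl_count size_alternating.
rewrite (_ : iota 0 k.*2 = iota 0 k ++ [seq k + i | i <- iota 0 k]); last first.
  by rewrite -addnn iotaD add0n -iotaDl addn0.
rewrite count_cat count_map.
rewrite (@eq_in_count _ (preim (addn k) _)
  (fun j => cox_eqb (prefix_refl (alternating x y k.*2) j) t)).
  by rewrite addnn odd_double.
move=> j; rewrite mem_iota add0n => /andP[_ j_lt] /=.
rewrite prefix_refl_alternating_shift //.
have rel_pr : weq (alternating x y k.*2 ++ prefix_refl (alternating x y k.*2) j)
                  (prefix_refl (alternating x y k.*2) j) by exact: cox_eq_catr _ rel1.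
apply/cox_eqbP/cox_eqbP => h; first exact: cox_eq_trans (cox_eq_sym rel_pr) h.
exact: cox_eq_trans rel_pr h.
Qed.

Lemma odd_refl_count_step u v t : cox_step M P u v -> all P u ->
  odd (refl_count u t) = odd (refl_count v t).
Proof.
case=> [a [b [s [x [Ps Px m_neq0 -> ->]]]]].
rewrite !all_cat => /andP[Pa /andP[Prel _]].
rewrite !(refl_count_cat _ _ Pa) (refl_count_cat _ _ Prel) alternating_flatten.
set t1 := rev a ++ t ++ a; set r := alternating s x (M s x).*2.
have rel1 : weq r [::] by rewrite /r -alternating_flatten; exact: cox_eq_relator.
have revrel1 : weq (rev r) [::].
  rewrite /r rev_alternating odd_double -alternating_flatten M_sym.
  by apply: cox_eq_relator; rewrite // -M_sym.
rewrite (@refl_count_cox_eqr _ (rev r ++ t1 ++ r) t1).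
  by rewrite !oddD (negbTE (refl_count_relator_even _ rel1)).
apply: cox_eq_trans (cox_eq_catr _ revrel1) _ => /=.
by apply: cox_eq_trans (cox_eq_catl _ rel1) _; rewrite cats0; exact: cox_eq_refl.
Qed.

Lemma odd_refl_count_cox_eq u v t : weq u v -> all P u ->
  odd (refl_count u t) = odd (refl_count v t).
Proof.
elim=> {u v} [u v uv|//|u v uv IH|u v w uv IH1 _ IH2] Pu.
- exact: odd_refl_count_step.
- by rewrite IH // (cox_eq_all uv).
- by rewrite IH1 // IH2 // -(cox_eq_all uv).
Qed.

Lemma all_take_drop (Q : pred X) j z : all Q z -> all Q (take j z) /\ all Q (drop j z).
Proof. by rewrite -{1}(cat_take_drop j z) all_cat => /andP. Qed.

Lemma prefix_refl_mul x j : all P x -> j < size x ->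
  weq (prefix_refl x j ++ x) (take j x ++ drop j.+1 x).
Proof.
move=> Px j_lt; have [Ptake _] := all_take_drop j Px.
have Pxj : P (nth x0 x j) by apply: (allP Px); exact: mem_nth.
have x_split : take j x ++ nth x0 x j :: drop j.+1 x = x.
  by rewrite -drop_nth // cat_take_drop.
rewrite /prefix_refl -{4}x_split -!catA /=; apply: cox_eq_catl.
have := cox_eq_ctx [:: nth x0 x j] (nth x0 x j :: drop j.+1 x) (cox_eq_revK Ptake).
by rewrite /= -catA => /cox_eq_trans; apply; exact: (cox_eq_cancel [::] _ Pxj).
Qed.

Section ParabolicConjugate.
Variables (J : pred X) (s : X).
Hypotheses (J_P : forall r, J r -> P r) (P_s : P s).
Hypothesis gen_notin : forall z, all J z -> ~ weq z [:: s].
Hypothesis conj_gen_notin : forall r z, J r -> M s r != 2%N -> all J z -> ~ weq z [:: s; r; s].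

Definition J_perp r := J r && (M s r == 2%N).

Lemma all_J_P z : all J z -> all P z.
Proof. by apply: sub_all => r; exact: J_P. Qed.

Lemma all_prefix_refl z j : all J z -> j < size z -> all J (prefix_refl z j).
Proof.
move=> Jz j_lt; have [Jtake _] := all_take_drop j Jz.
by rewrite /prefix_refl all_cat /= all_rev Jtake (allP Jz) // mem_nth.
Qed.

Lemma refl_count_gen_eq0 x t : all J x -> weq t [:: s] -> refl_count x t = 0.
Proof.
move=> Jx ts; apply/eqP; rewrite eqn0Ngt -has_count; apply/hasPn => j.
rewrite mem_iota add0n => /andP[_ j_lt]; apply/negP => /cox_eqbP refl_t.
exact: gen_notin (all_prefix_refl Jx j_lt) (cox_eq_trans refl_t ts).
Qed.

(* Counting the reflections equal to [s] in [s x = y s] forces [y^-1 s y = s]. *)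
Lemma conj_parabolic_commute x y : all J x -> all J y -> weq (s :: x ++ [:: s]) y ->
  weq (x ++ [:: s]) (s :: x).
Proof.
move=> Jx Jy sxs_y; have Px := all_J_P Jx; have Py := all_J_P Jy.
have sx_ys : weq (s :: x) (y ++ [:: s]).
  have := cox_eq_catr [:: s] sxs_y => /= /(cox_eq_trans _); apply; rewrite -catA /=.
  by have := cox_eq_cancel (s :: x) [::] P_s; rewrite cats0 /= => /cox_eq_sym.
have count_sx : refl_count (s :: x) [:: s] = 1.
  rewrite -cat1s refl_count_cat /= ?P_s // refl_count1 cox_eqb_refl refl_count_gen_eq0 //.
  exact: (cox_eq_cancel [::] [:: s] P_s).
have count_ys : refl_count (y ++ [:: s]) [:: s] = cox_eqb [:: s] (rev y ++ [:: s] ++ y).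
  by rewrite refl_count_cat // refl_count1 refl_count_gen_eq0 //; exact: cox_eq_refl.
have := odd_refl_count_cox_eq [:: s] sx_ys; rewrite /= P_s Px count_sx count_ys => /(_ isT).
case: cox_eqbP => [/(cox_eq_conj _ _ Py) ysy_s _|_ //].
have ys_sy : weq (y ++ [:: s]) (s :: y).
  have := cox_eq_catr y ysy_s; rewrite -!catA => ysyy_sy; apply: cox_eq_trans _ ysyy_sy.
  have : all P (rev y) by rewrite all_rev.
  by move/(cox_eq_cancel_r (y ++ [:: s])); rewrite revK -catA => /cox_eq_sym.
have x_y : weq x y by apply: (cox_eq_cons_cancel P_s); exact: cox_eq_trans sx_ys ys_sy.
apply: cox_eq_trans (cox_eq_catr _ x_y) _; apply: cox_eq_trans ys_sy _.
by have := cox_eq_catl [:: s] (cox_eq_sym x_y).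
Qed.

(* If [r x1] has no shorter expression over [J], the letter [r] is the only prefix
   reflection of it equal to [r]. *)
Lemma odd_refl_count_reduced_head r x1 : all J (r :: x1) ->
  ~ (exists z, [/\ all J z, size z < size (r :: x1) & weq z (r :: x1)]) ->
  odd (refl_count (r :: x1) [:: r]).
Proof.
move=> Jx reduced; have /andP[Jr Jx1] := Jx; have Pr := J_P Jr.
rewrite /refl_count /= {1}/prefix_refl /= cox_eqb_refl.
rewrite (_ : count _ _ = 0) //; apply/eqP; rewrite eqn0Ngt -has_count; apply/hasPn => j.
rewrite mem_iota => /andP[]; case: j => // j _ j_lt; apply/negP => /cox_eqbP refl_r.
have j_lt' : j.+1 < size (r :: x1) by rewrite /=; lia.
have := prefix_refl_mul (all_J_P Jx) j_lt'; rewrite /=; set z := take j x1 ++ drop j.+1 x1.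
move=> mul_eq; apply: reduced; exists z; split.
- have [J1 _] := all_take_drop j Jx1; have [_ J2] := all_take_drop j.+1 Jx1.
  by rewrite all_cat J1 J2.
- have j_lt1 : j < size x1 by move: j_lt; rewrite /=; lia.
  by rewrite /z size_cat size_take size_drop /= j_lt1; lia.
- have x1_rz : weq x1 (r :: z).
    apply: cox_eq_trans (cox_eq_sym (cox_eq_cancel [::] x1 Pr)) _.
    exact: cox_eq_trans (cox_eq_sym (cox_eq_catr (r :: x1) refl_r)) mul_eq.
  exact: cox_eq_sym (cox_eq_trans (cox_eq_catl [:: r] x1_rz) (cox_eq_cancel [::] z Pr)).
Qed.

Lemma odd_refl_count_conj_gen x t : all J x -> all J t -> weq (x ++ [:: s]) (s :: x) ->
  odd (refl_count x (s :: t ++ [:: s])) = odd (refl_count x t).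
Proof.
move=> Jx Jt xs_sx; have Px := all_J_P Jx.
have := odd_refl_count_cox_eq t xs_sx; rewrite all_cat Px /= P_s => /(_ isT).
rewrite refl_count_cat // -[s :: x]cat1s refl_count_cat /= ?P_s // !refl_count1.
have /negbTE -> : ~~ cox_eqb [:: s] (rev x ++ t ++ x).
  by apply/cox_eqbP => /cox_eq_sym; apply: gen_notin; rewrite !all_cat all_rev Jx Jt.
have /negbTE -> : ~~ cox_eqb [:: s] t by apply/cox_eqbP => /cox_eq_sym; exact: gen_notin.
by rewrite addn0 add0n => ->.
Qed.

Lemma parabolic_commute_gen x : all J x -> weq (x ++ [:: s]) (s :: x) ->
  exists2 x', all J_perp x' & weq x x'.
Proof.
move: {2}(size x) (leqnn (size x)) => N; elim: N x => [|N IH] x x_le Jx xs_sx.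
  by move: x_le; rewrite leqn0 => /nilP ->; exists [::]; last exact: cox_eq_refl.
case: (excluded_middle_informative (exists z, [/\ all J z, size z < size x & weq z x])).
  case=> z [Jz z_lt zx].
  have zs_sz : weq (z ++ [:: s]) (s :: z).
    apply: cox_eq_trans (cox_eq_catr _ zx) _; apply: cox_eq_trans xs_sx _.
    by have := cox_eq_catl [:: s] (cox_eq_sym zx).
  have [|z' J'z' zz'] := IH z _ Jz zs_sz; first by rewrite -ltnS (leq_trans z_lt x_le).
  by exists z'; last exact: cox_eq_trans (cox_eq_sym zx) zz'.
case: x x_le Jx xs_sx => [|r x1] x_le Jx xs_sx reduced.
  by exists [::]; last exact: cox_eq_refl.
have /andP[Jr Jx1] := Jx; have Pr := J_P Jr.
have conj_odd : odd (refl_count (r :: x1) [:: s; r; s]).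
  rewrite (odd_refl_count_conj_gen (t := [:: r])) //= ?Jr //.
  exact: odd_refl_count_reduced_head.
have msr2 : M s r == 2%N.
  apply/contraT => m_neq2.
  have : 0 < refl_count (r :: x1) [:: s; r; s] by case: refl_count conj_odd.
  rewrite /refl_count -has_count => /hasP[j]; rewrite mem_iota add0n => /andP[_ j_lt].
  by move/cox_eqbP/(conj_gen_notin Jr m_neq2 (all_prefix_refl Jx j_lt)).
have x1s_sx1 : weq (x1 ++ [:: s]) (s :: x1).
  apply: (cox_eq_cons_cancel Pr); apply: cox_eq_trans xs_sx _.
  by have := cox_eq_ctx [::] x1 (cox_eq_commute P_s Pr (eqP msr2)).
have [|x1' J'x1' x1x1'] := IH x1 _ Jx1 x1s_sx1; first by [].
exists (r :: x1'); first by rewrite /= J'x1' andbT /J_perp Jr msr2.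
by have := cox_eq_catl [:: r] x1x1'.
Qed.

Lemma parabolic_conj_gen x y : all J x -> all J y -> weq (s :: x ++ [:: s]) y ->
  exists2 x', all J_perp x' & weq x x'.
Proof. by move=> Jx Jy /(conj_parabolic_commute Jx Jy); exact: parabolic_commute_gen. Qed.
End ParabolicConjugate.
End CoxeterWords.

Section ExtendedDiagram.
Variables (V : finType) (m : V -> V -> nat) (s1 : V).
Hypothesis m_coxeter : coxeter_matrix m.
Local Notation X := (V + nat)%type.
Local Notation M := (Mext m s1).

Lemma Mext_sym (x y : X) : M x y = M y x.
Proof.
case: m_coxeter => m_sym _.
case: x y => [a|[|k]] [b|[|l]] //=; rewrite ?m_sym ?orbF //.
by rewrite eq_sym orbC (eq_sym l.+2).
Qed.

Lemma Mext_diag (x : X) : M x x = 1%N.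
Proof. by case: m_coxeter => _ [m_diag _]; case: x => [a|[|k]] //=; rewrite ?m_diag ?eqxx. Qed.

Lemma Mext_neq1 (x y : X) : x != y -> M x y != 1%N.
Proof.
case: m_coxeter => _ [_ m_neq1].
case: x y => [a|[|k]] [b|[|l]] //= x_neq_y; rewrite ?m_neq1 //; try by case: ifP.
case: ifP => [/eqP [kl]|_]; last by case: ifP.
by rewrite kl eqxx in x_neq_y.
Qed.

(* [vert k] is the vertex set S_(k-1) of Gamma_(k-1), shifted so that the index is a
   natural number: [vert 0] is S_(-1) and [vert 1] is S_0. *)
Definition vert k (x : X) : bool :=
  match k with
  | 0 => if x is inl v then (v != s1) && (m s1 v == 2%N) else false
  | 1 => if x is inl v then v != s1 else false
  | k'.+2 => if x is inr j then (j + 2 <= k'.+1)%N else true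
  end.

Lemma inS_vert k : inS m s1 (k%:Z - 1)%R =1 vert k.
Proof.
case: k => [|k] x //.
rewrite (_ : (k.+1%:Z - 1 = k%:Z)%R); last by rewrite -addn1 PoszD GRing.addrK.
by case: k.
Qed.

Lemma inS_vertS n : inS m s1 (n%:Z)%R =1 vert n.+1.
Proof. by move=> x; rewrite -inS_vert -addn1 PoszD GRing.addrK. Qed.

Lemma word_in_vert k w : word_in m s1 (k%:Z - 1) w = all (vert k) w.
Proof. exact/eq_all/inS_vert. Qed.

Lemma word_in_vert_pred k w : (1 <= k)%N -> word_in m s1 (k%:Z - 2) w = all (vert k.-1) w.
Proof.
by case: k => // k _; rewrite -word_in_vert; congr word_in; rewrite -[k.+1]addn1 PoszD /=; ring.
Qed.

Lemma vert_mono a b x : (a <= b)%N -> vert a x -> vert b x.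
Proof. by case: a => [|[|a]]; case: b => [|[|b]] //; case: x => [v|j] //=; lia. Qed.

Lemma gen_vertS k : (1 <= k)%N -> vert k.+1 (gen s1 k).
Proof. by case: k => [|[|k]] //= _; rewrite /gen /=; lia. Qed.

Lemma gen_notin_vert k : (1 <= k)%N -> ~~ vert k (gen s1 k).
Proof. by case: k => [|[|k]] //= _; rewrite /gen /= ?eqxx //; lia. Qed.

Lemma vert_commute_gen k r :
  (1 <= k)%N -> vert k r -> M (gen s1 k) r == 2%N -> vert k.-1 r.
Proof.
rewrite /gen; case: k => [|[|[|k]]] //= _.
- by case: r => [v|j] //= -> ->.
- by case: r => [v|j] /=; [case: ifP => // -> | lia].
- case: r => [v|j] //= j_le.
  by case: ifP => // /negbT j_neq; case: ifP => // /negbT j_nadj _; lia.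
Qed.

Lemma gen_commute_vert i l r : (1 <= i <= l)%N -> vert i.-1 r -> M (gen s1 l) r = 2%N.
Proof.
rewrite /gen; case: i => [|[|[|i]]] //= i_le.
- case: r => [v|j] //= /andP[v_neq /eqP mv2].
  by case: ifP => _ //; case: (l - 2)%N => [|k] //=; rewrite (negbTE v_neq).
- case: r => [v|j] //= v_neq.
  rewrite (_ : (l == 1)%N = false); last by lia.
  by case: (l - 2)%N => [|k] //=; rewrite (negbTE v_neq).
- rewrite (_ : (l == 1)%N = false); last by lia.
  case: r => [v|j] //= j_le; case E: (l - 2)%N => [|k]; try lia.
  by case: ifP => [/eqP|_]; [lia | case: ifP => //; lia].
Qed.

Variable n : nat.
Local Notation P := (inS m s1 n%:Z).
Local Notation weq := (cox_eq M P).
Local Notation cw j := (cword s1 j n).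

Definition parabolic k y := exists w, all (vert k) w /\ weq y w.

Lemma vert_inS k x : (k <= n.+1)%N -> vert k x -> P x.
Proof. by move=> k_le /(vert_mono k_le); rewrite inS_vertS. Qed.

Lemma all_vert_inS k w : (k <= n.+1)%N -> all (vert k) w -> all P w.
Proof. by move=> k_le; apply: sub_all => x; exact: vert_inS. Qed.

Lemma gen_inS l : (1 <= l <= n)%N -> P (gen s1 l).
Proof. by case/andP=> l_ge1 l_le; apply: (@vert_inS l.+1) => //; exact: gen_vertS. Qed.

Lemma cword_nil : cw n.+1 = [::].
Proof. by rewrite /cword subnn. Qed.

Lemma cword_cons j : (j <= n)%N -> cw j = gen s1 j :: cw j.+1.
Proof. by move=> j_le; rewrite /cword subSn // subSS. Qed.

Lemma all_cword_inS j : (1 <= j)%N -> all P (cw j).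
Proof.
move=> j_ge1; rewrite /cword all_map; apply/allP => l; rewrite mem_iota => l_bd /=.
by apply: gen_inS; lia.
Qed.

Lemma parabolic_conj_gen_vert k y : (1 <= k <= n)%N -> parabolic k y ->
  parabolic k (gen s1 k :: y ++ [:: gen s1 k]) -> parabolic k.-1 y.
Proof.
move=> k_bd [w [Jw yw]] [w2 [Jw2 conj_w2]]; have k_ge1 : (1 <= k)%N by case/andP: k_bd.
have J_P r : vert k r -> P r by apply: vert_inS; lia.
have conj_w_w2 : weq (gen s1 k :: w ++ [:: gen s1 k]) w2.
  by apply: cox_eq_trans _ conj_w2; have := cox_eq_ctx [:: gen s1 k] [:: gen s1 k] (cox_eq_sym yw).
have [||x' J'x' wx'] := parabolic_conj_gen Mext_sym Mext_diag (inl s1) J_P (gen_inS k_bd)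
  _ _ Jw Jw2 conj_w_w2.
- exact: (gen_notin_parabolic (J := vert k) Mext_sym Mext_diag Mext_neq1 (gen_notin_vert k_ge1)).
- exact: (conj_gen_notin_parabolic (J := vert k) Mext_sym Mext_diag Mext_neq1
    (gen_notin_vert k_ge1)).
exists x'; split; last exact: cox_eq_trans yw wx'.
by apply/allP => r /(allP J'x') /andP[Jr /vert_commute_gen]; apply.
Qed.

(* Conjugating by [s_j], then by [s_(j+1) ... s_n], lands in W_(n-1); descend on [j]. *)
Lemma parabolic_conj_cword j y : (1 <= j <= n.+1)%N -> parabolic j y ->
  parabolic n (rev (cw j) ++ y ++ cw j) -> parabolic j.-1 y.
Proof.
move: {2}(n.+1 - j)%N (erefl (n.+1 - j)%N) => d; elim: d j y => [|d IH] j y d_eq j_bd y_j.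
  have -> : j = n.+1 by lia.
  by rewrite cword_nil /= cats0.
have j_le : (j <= n)%N by lia.
rewrite cword_cons //; set g := gen s1 j; set c := cw j.+1.
rewrite (_ : rev (g :: c) ++ y ++ g :: c = rev c ++ (g :: y ++ [:: g]) ++ c); last first.
  by rewrite rev_cons -cats1 /= -!catA.
move=> conj_c.
have y_conj : parabolic j.+1 (g :: y ++ [:: g]).
  case: y_j => w [Jw yw]; exists (g :: w ++ [:: g]); split.
    have g_in : vert j.+1 g by apply: gen_vertS; lia.
    apply/allP => x; rewrite inE mem_cat inE => /orP[/eqP->//|/orP[x_w|/eqP->//]].
    exact: vert_mono (leqnSn j) (allP Jw x x_w).
  by have := cox_eq_ctx [:: g] [:: g] yw.
apply: parabolic_conj_gen_vert y_j _; first lia.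
by apply: (IH j.+1 _ _ _ y_conj conj_c); lia.
Qed.

Lemma parabolic_of_conj_cwords i x : (1 <= i <= n)%N ->
  (forall j, (i <= j <= n.+1)%N -> parabolic n (rev (cw j) ++ x ++ cw j)) ->
  parabolic i.-1 x.
Proof.
move=> i_bd conj_x.
suff x_vert d : (d <= n.+1 - i)%N -> parabolic (n - d) x.
  by rewrite (_ : i.-1 = n - (n.+1 - i))%N; [apply: x_vert | lia].
elim: d => [|d IH] d_le.
  have [|w [Jw xw]] := conj_x n.+1; first lia.
  by exists w; rewrite subn0; move: xw; rewrite cword_nil /= cats0.
rewrite subnS; apply: parabolic_conj_cword (IH _) (conj_x _ _); lia.
Qed.

Lemma conj_cwords_of_parabolic i x j : (1 <= i <= j)%N -> (j <= n.+1)%N ->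
  parabolic i.-1 x -> exists w, all (vert n) w /\ weq x (cw j ++ w ++ rev (cw j)).
Proof.
move=> i_le j_le [w [Jw xw]]; exists w; split.
  by apply: sub_all Jw => r; apply: vert_mono; lia.
have Pc : all P (cw j) by apply: all_cword_inS; lia.
have Pw : all P w by apply: (@all_vert_inS i.-1) => //; lia.
have cw_wc : weq (cw j ++ w) (w ++ cw j).
  apply: (cox_eq_commute_word Mext_sym Mext_diag) => // g.
  rewrite /cword => /mapP[l]; rewrite mem_iota => l_bd ->.
  by apply/allP => r /(allP Jw) r_in; apply/eqP; apply: (gen_commute_vert (i := i)) => //; lia.
apply: cox_eq_trans xw _; apply: cox_eq_trans (cox_eq_sym (cox_eq_cancel_r Mext_diag w Pc)) _.
by have := cox_eq_catr (rev (cw j)) (cox_eq_sym cw_wc); rewrite -!catA.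
Qed.

Lemma conj_cwords_iff i x : (1 <= i <= n)%N ->
  (forall j, (i <= j <= n.+1)%N -> exists w, word_in m s1 (n%:Z - 1) w /\
     Weq m s1 n x (cw j ++ w ++ rev (cw j)))
  <-> exists w, word_in m s1 (i%:Z - 2) w /\ Weq m s1 n x w.
Proof.
move=> i_bd; rewrite /Weq; split=> [conj_x | [w [Jw xw]] j j_bd].
- have conj_x' j : (i <= j <= n.+1)%N -> parabolic n (rev (cw j) ++ x ++ cw j).
    move=> j_bd; have [w [Jw xw]] := conj_x j j_bd; exists w; split; first by rewrite -word_in_vert.
    by apply/cox_eq_sym/(cox_eq_conj Mext_diag _ _ (all_cword_inS _)); [lia | exact: cox_eq_sym].
  have [w [Jw xw]] := parabolic_of_conj_cwords i_bd conj_x'.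
  by exists w; rewrite word_in_vert_pred //; case/andP: i_bd.
- have [|||w' [Jw' xw']] := @conj_cwords_of_parabolic i x j; try lia.
    by exists w; rewrite -word_in_vert_pred //; case/andP: i_bd.
  by exists w'; rewrite word_in_vert.
Qed.

Lemma word_in_pred_inS w : word_in m s1 (n%:Z - 1) w -> all P w.
Proof. by rewrite word_in_vert; apply: all_vert_inS. Qed.
End ExtendedDiagram.

Theorem proposition3p3 (V : finType) (m : V -> V -> nat) (s1 : V)
  (hm : coxeter_matrix m) (n i : nat) (hn : (1 <= n)%N)
  (hi1 : (1 <= i)%N) (hin : (i <= n)%N) :
  (forall sigma tau : seq (V + nat)%type,
     word_in m s1 n%:Z sigma -> word_in m s1 n%:Z tau ->
     (forall j, (i <= j <= n.+1)%N ->
        exists w, word_in m s1 (n%:Z - 1) w /\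
          Weq m s1 n (sigma ++ cword s1 j n) (tau ++ cword s1 j n ++ w)) ->
     exists w, word_in m s1 (i%:Z - 2) w /\ Weq m s1 n (rev sigma ++ tau) w)
  /\
  (forall x : seq (V + nat)%type, word_in m s1 n%:Z x ->
     ((forall j, (i <= j <= n.+1)%N ->
        exists w, word_in m s1 (n%:Z - 1) w /\
          Weq m s1 n x (cword s1 j n ++ w ++ rev (cword s1 j n)))
      <-> exists w, word_in m s1 (i%:Z - 2) w /\ Weq m s1 n x w)).
Proof.
have i_bd : (1 <= i <= n)%N by rewrite hi1 hin.
split=> [sigma tau Psigma Ptau cosets|x _]; last exact: conj_cwords_iff.
apply/(@conj_cwords_iff _ _ s1 hm n i (rev sigma ++ tau) i_bd) => j j_bd.
have [w [Jw sigma_tau]] := cosets j j_bd.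
exists (rev w); split; first by rewrite /word_in all_rev.
apply: (cox_eq_coset_conj (Mext_diag s1 hm) Psigma) sigma_tau.
- by apply: all_cword_inS; lia.
- exact: word_in_pred_inS Jw.
Qed.
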